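(* Let $p\in\mathbb{R}$ and $h_p(x)=(1-x)^pK(x)$ on $(0,1)$. Then $h_p$ is strictly convex on $(0,1)$ if and only if $p\le 0$ or $p\ge \frac{3(2+\sqrt2)}{8}$, and $h_p$ is strictly concave on $(0,1)$ if and only if $p\in\big[\frac{3(2-\sqrt2)}{8},1\big]$.
   Context: $K(x)={\cal K}(\sqrt x)=\frac\pi2\,{}_2F_1(1/2,1/2;1;x)$ for $x\in[0,1)$, where ${\cal K}(r)=\int_0^{\pi/2}(1-r^2\sin^2t)^{-1/2}dt$ is the complete elliptic integral of the first kind. *)

From Stdlib Require Import Reals Lra.
From Coquelicot Require Import Coquelicot.
Open Scope R_scope.

Definition ellipticK (r : R) : R :=
  RInt (fun t => / sqrt (1 - r ^ 2 * (sin t) ^ 2)) 0 (PI / 2).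

Definition Kx (x : R) : R := ellipticK (sqrt x).

Definition h (p x : R) : R := Rpower (1 - x) p * Kx x.

Definition strictly_convex_on (f : R -> R) (a b : R) : Prop :=
  forall x y t, a < x < b -> a < y < b -> x <> y -> 0 < t < 1 ->
    f (t * x + (1 - t) * y) < t * f x + (1 - t) * f y.

Definition strictly_concave_on (f : R -> R) (a b : R) : Prop :=
  forall x y t, a < x < b -> a < y < b -> x <> y -> 0 < t < 1 ->
    t * f x + (1 - t) * f y < f (t * x + (1 - t) * y).

(* Differentiating twice under the integral sign,
   h_p''(x) = (1 - x)^(p-2) M_p(x) with M_p = (p^2 - p) K - 2p(1 - x) K' + (1 - x)^2 K''.
   Writing s = sin t and w = (1 - x s^2)^(-1/2), and subtracting from the integrand of M_p the
   t-derivative of a function vanishing at t = 0 and t = pi/2, one gets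
     M_p(x) = \int_0^{pi/2} w s^2 ((1 - x) D(p) + x E(p, r)) dt,   r = (1 - x) s^2 w^2 in [0, 1),
   with D(p) = 2p^2 - 3p + 9/16 = 2(p - 3(2 - sqrt 2)/8)(p - 3(2 + sqrt 2)/8) and
   E(p, r) = p^2 - p + (p^2 - 2p + 3/8) r + 3 r^2 / 16.  The sign of this bracket is constant
   in the two claimed ranges of p.  Outside them the sign of M_p changes: near x = 0 it is
   the sign of D(p), while near x = 1, K(x) >= -ln sqrt(1 - x) blows up and the remaining
   terms stay bounded, so it is the sign of p^2 - p. *)

From Stdlib Require Import Reals Lra Psatz.
From Coquelicot Require Import Coquelicot.
Open Scope R_scope.

(** * Strict convexity from the second derivative *)

Lemma MVT_open (f df : R -> R) (a b u v : R) :
  (forall x, a < x < b -> is_derive f x (df x)) -> a < u -> u < v -> v < b ->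
  exists c, u < c < v /\ f v - f u = df c * (v - u).
Proof.
  intros Hd Hu Huv Hv.
  destruct (MVT_cor2 f df u v Huv) as [c [Hc1 Hc2]].
  - intros c Hc. apply is_derive_Reals, Hd. lra.
  - now exists c.
Qed.

Lemma strictly_increasing_of_derive_pos (f df : R -> R) (a b : R) :
  (forall x, a < x < b -> is_derive f x (df x)) -> (forall x, a < x < b -> 0 < df x) ->
  forall u v, a < u -> u < v -> v < b -> f u < f v.
Proof.
  intros Hd Hpos u v Hu Huv Hv.
  destruct (MVT_open f df a b u v Hd Hu Huv Hv) as [c [Hc E]].
  assert (0 < df c) by (apply Hpos; lra). nra.
Qed.

Lemma strictly_convex_on_of_derive2_pos (f df d2f : R -> R) (a b : R) :
  (forall x, a < x < b -> is_derive f x (df x)) ->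
  (forall x, a < x < b -> is_derive df x (d2f x)) ->
  (forall x, a < x < b -> 0 < d2f x) -> strictly_convex_on f a b.
Proof.
  intros Hd1 Hd2 Hpos.
  assert (Hord : forall x y t, a < x < b -> a < y < b -> x < y -> 0 < t < 1 ->
            f (t * x + (1 - t) * y) < t * f x + (1 - t) * f y).
  { intros x y t Hx Hy Hxy Ht. set (z := t * x + (1 - t) * y).
    assert (x < z < y) by (unfold z; split; nra).
    destruct (MVT_open f df a b x z Hd1) as [c1 [Hc1 E1]]; try lra.
    destruct (MVT_open f df a b z y Hd1) as [c2 [Hc2 E2]]; try lra.
    assert (df c1 < df c2)
      by (apply (strictly_increasing_of_derive_pos df d2f a b); auto; lra).
    replace (z - x) with ((1 - t) * (y - x)) in E1 by (unfold z; ring).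
    replace (y - z) with (t * (y - x)) in E2 by (unfold z; ring).
    assert (0 < t * (1 - t) * (y - x) * (df c2 - df c1)).
    { repeat apply Rmult_lt_0_compat; lra. }
    nra. }
  intros x y t Hx Hy Hxy Ht. destruct (Rlt_or_le x y) as [Hlt | Hle].
  - now apply Hord.
  - replace (t * x + (1 - t) * y) with ((1 - t) * y + (1 - (1 - t)) * x) by ring.
    replace (t * f x + (1 - t) * f y) with ((1 - t) * f y + (1 - (1 - t)) * f x) by ring.
    apply Hord; auto; lra.
Qed.

Lemma strictly_concave_on_of_derive2_neg (f df d2f : R -> R) (a b : R) :
  (forall x, a < x < b -> is_derive f x (df x)) ->
  (forall x, a < x < b -> is_derive df x (d2f x)) ->
  (forall x, a < x < b -> d2f x < 0) -> strictly_concave_on f a b.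
Proof.
  intros Hd1 Hd2 Hneg x y t Hx Hy Hxy Ht.
  assert (Hconv : strictly_convex_on (fun x => - f x) a b).
  { apply (strictly_convex_on_of_derive2_pos _ (fun x => - df x) (fun x => - d2f x)).
    - intros z Hz. apply (@is_derive_opp R_AbsRing R_NormedModule). auto.
    - intros z Hz. apply (@is_derive_opp R_AbsRing R_NormedModule). auto.
    - intros z Hz. specialize (Hneg z Hz). lra. }
  specialize (Hconv x y t Hx Hy Hxy Ht). simpl in Hconv. lra.
Qed.

Lemma convex_comb_between (a b x y t : R) :
  a < x < b -> a < y < b -> 0 < t < 1 -> a < t * x + (1 - t) * y < b.
Proof. intros Hx Hy Ht. split; nra. Qed.

Lemma strictly_convex_on_ext (f g : R -> R) (a b : R) :
  (forall x, a < x < b -> f x = g x) -> strictly_convex_on f a b -> strictly_convex_on g a b.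
Proof.
  intros E Hf x y t Hx Hy Hxy Ht.
  rewrite <- !E by (auto; now apply convex_comb_between). now apply Hf.
Qed.

Lemma strictly_concave_on_ext (f g : R -> R) (a b : R) :
  (forall x, a < x < b -> f x = g x) -> strictly_concave_on f a b -> strictly_concave_on g a b.
Proof.
  intros E Hf x y t Hx Hy Hxy Ht.
  rewrite <- !E by (auto; now apply convex_comb_between). now apply Hf.
Qed.

Lemma strictly_convex_on_sub (f : R -> R) (a b c d : R) :
  a <= c -> d <= b -> strictly_convex_on f a b -> strictly_convex_on f c d.
Proof. intros Hac Hdb Hf x y t Hx Hy. apply Hf; lra. Qed.

Lemma strictly_concave_on_sub (f : R -> R) (a b c d : R) :
  a <= c -> d <= b -> strictly_concave_on f a b -> strictly_concave_on f c d.
Proof. intros Hac Hdb Hf x y t Hx Hy. apply Hf; lra. Qed.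

Lemma not_strictly_convex_concave (f : R -> R) (a b : R) :
  a < b -> strictly_convex_on f a b -> strictly_concave_on f a b -> False.
Proof.
  intros Hab Hv Hc.
  assert (Hx : a < (3 * a + b) / 4 < b) by lra.
  assert (Hy : a < (a + 3 * b) / 4 < b) by lra.
  assert (Hxy : (3 * a + b) / 4 <> (a + 3 * b) / 4) by lra.
  specialize (Hv _ _ (1/2) Hx Hy Hxy ltac:(lra)).
  specialize (Hc _ _ (1/2) Hx Hy Hxy ltac:(lra)). lra.
Qed.

Lemma ex_RInt_of_continuous (f : R -> R) (a b : R) :
  (forall t, continuous f t) -> ex_RInt f a b.
Proof. intros Hf. apply (@ex_RInt_continuous R_CompleteNormedModule). auto. Qed.

Lemma RInt_lin2 (f g : R -> R) (a b c1 c2 : R) : ex_RInt f a b -> ex_RInt g a b ->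
  RInt (fun t => c1 * f t + c2 * g t) a b = c1 * RInt f a b + c2 * RInt g a b.
Proof.
  intros Hf Hg. apply is_RInt_unique.
  apply (@is_RInt_plus R_NormedModule);
    apply (@is_RInt_scal R_NormedModule); now apply (@RInt_correct R_CompleteNormedModule).
Qed.

Lemma RInt_lin3 (f g k : R -> R) (a b c1 c2 c3 : R) :
  ex_RInt f a b -> ex_RInt g a b -> ex_RInt k a b ->
  RInt (fun t => c1 * f t + c2 * g t + c3 * k t) a b =
  c1 * RInt f a b + c2 * RInt g a b + c3 * RInt k a b.
Proof.
  intros Hf Hg Hk. apply is_RInt_unique.
  apply (@is_RInt_plus R_NormedModule); [apply (@is_RInt_plus R_NormedModule) |];
    apply (@is_RInt_scal R_NormedModule); now apply (@RInt_correct R_CompleteNormedModule).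
Qed.

Lemma RInt_lt_0 (g : R -> R) (a b : R) : a < b ->
  (forall x, a < x < b -> g x < 0) -> (forall x, a <= x <= b -> continuous g x) ->
  RInt g a b < 0.
Proof.
  intros Hab Hneg Hc.
  assert (0 < RInt (fun t => - g t) a b).
  { apply RInt_gt_0; auto.
    - intros x Hx. specialize (Hneg x Hx). lra.
    - intros x Hx. apply (@continuous_opp R_UniformSpace R_AbsRing R_NormedModule g); auto. }
  rewrite (RInt_opp (V := R_CompleteNormedModule)) in H.
  - unfold opp in H; simpl in H. lra.
  - apply (@ex_RInt_continuous R_CompleteNormedModule).
    intros t Ht. rewrite Rmin_left, Rmax_right in Ht by lra. auto.
Qed.

(* The hypotheses are stated on the open half-line [u < c] so that they hold in a
   neighbourhood of [x]. *)
Lemma is_derive_RInt_param_lt (f df : R -> R -> R) (a b c x : R) : x < c ->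
  (forall u t, u < c -> is_derive (fun z => f z t) u (df u t)) ->
  (forall u t, u < c -> continuity_2d_pt df u t) ->
  (forall u t, u < c -> continuous (f u) t) ->
  is_derive (fun u => RInt (f u) a b) x (RInt (df x) a b).
Proof.
  intros Hx Hd Hc Hf.
  assert (Hl : locally x (fun u => u < c)) by exact (open_lt c x Hx).
  rewrite (RInt_ext (df x) (fun t => Derive (fun u => f u t) x)).
  2: { intros t _. symmetry. apply is_derive_unique, Hd, Hx. }
  apply is_derive_RInt_param.
  - apply filter_imp with (2 := Hl). intros u Hu t _. eexists. now apply Hd.
  - intros t _. apply continuity_2d_pt_ext_loc with df.
    + assert (Hr : 0 < (c - x) / 2) by lra.
      exists (mkposreal _ Hr). intros u v Hu _. simpl in Hu. apply Rabs_def2 in Hu.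
      symmetry. apply is_derive_unique, Hd. lra.
    + now apply Hc.
  - apply filter_imp with (2 := Hl). intros u Hu.
    apply (@ex_RInt_continuous R_CompleteNormedModule). intros z _. now apply Hf.
Qed.

(** * The elliptic integral as a function of the squared modulus *)

Definition Kint (x t : R) : R := / sqrt (1 - x * sin t ^ 2).
Definition K (x : R) : R := RInt (Kint x) 0 (PI / 2).

Definition dKint (x t : R) : R := sin t ^ 2 * Kint x t ^ 3 / 2.
Definition dK (x : R) : R := RInt (dKint x) 0 (PI / 2).

Definition d2Kint (x t : R) : R := 3 / 4 * sin t ^ 4 * Kint x t ^ 5.
Definition d2K (x : R) : R := RInt (d2Kint x) 0 (PI / 2).

Lemma PI2_pos : 0 < PI / 2.
Proof. pose proof PI_RGT_0. lra. Qed.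

Lemma sin_cos_sq (t : R) : cos t ^ 2 = 1 - sin t ^ 2.
Proof. pose proof (sin2_cos2 t). unfold Rsqr in *. simpl. lra. Qed.

Lemma sin_cos_pos (t : R) : 0 < t < PI / 2 -> 0 < sin t < 1 /\ 0 < cos t.
Proof.
  intros Ht. pose proof PI_RGT_0.
  assert (0 < sin t) by (apply sin_gt_0; lra).
  assert (0 < cos t) by (apply cos_gt_0; lra).
  pose proof (sin_cos_sq t). repeat split; nra.
Qed.

Lemma Kint_den_pos (x t : R) : x < 1 -> 0 < 1 - x * sin t ^ 2.
Proof.
  intros Hx. pose proof (sin_cos_sq t). pose proof (pow2_ge_0 (cos t)).
  pose proof (pow2_ge_0 (sin t)). destruct (Rle_dec x 0); nra.
Qed.

Lemma sqrt_Kint_den_pos (x t : R) : x < 1 -> 0 < sqrt (1 - x * sin t ^ 2).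
Proof. intros Hx. apply sqrt_lt_R0, Kint_den_pos, Hx. Qed.

Lemma Kint_pos (x t : R) : x < 1 -> 0 < Kint x t.
Proof. intros Hx. apply Rinv_0_lt_compat, sqrt_Kint_den_pos, Hx. Qed.

Lemma Kint_sq (x t : R) : x < 1 -> Kint x t ^ 2 * (1 - x * sin t ^ 2) = 1.
Proof.
  intros Hx. unfold Kint. pose proof (sqrt_Kint_den_pos x t Hx).
  rewrite <- (sqrt_sqrt (1 - x * sin t ^ 2)) at 2 by (apply Rlt_le, Kint_den_pos, Hx).
  field. lra.
Qed.

Lemma Kint_at_0 (x : R) : Kint x 0 = 1.
Proof.
  unfold Kint. rewrite sin_0. replace (1 - x * 0 ^ 2) with 1 by ring.
  rewrite sqrt_1. apply Rinv_1.
Qed.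

(* [auto_derive] spells [1 - x * sin t ^ 2] as [1 + - (x * (sin t * (sin t * 1)))]. *)
Ltac fold_Kint_den :=
  repeat match goal with
  | |- context [1 + - (?x * (sin ?t * (sin ?t * 1)))] =>
      replace (1 + - (x * (sin t * (sin t * 1)))) with (1 - x * sin t ^ 2) by ring
  end.

Lemma is_derive_Kint (x t : R) : x < 1 -> is_derive (fun u => Kint u t) x (dKint x t).
Proof.
  intros Hx. pose proof (sqrt_Kint_den_pos x t Hx). pose proof (Kint_den_pos x t Hx).
  unfold dKint, Kint. auto_derive; fold_Kint_den.
  - repeat split; lra.
  - field. lra.
Qed.

Lemma is_derive_dKint (x t : R) : x < 1 -> is_derive (fun u => dKint u t) x (d2Kint x t).
Proof.
  intros Hx. pose proof (sqrt_Kint_den_pos x t Hx). pose proof (Kint_den_pos x t Hx).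
  unfold d2Kint, dKint, Kint. auto_derive; fold_Kint_den.
  - repeat split; lra.
  - field. lra.
Qed.

Lemma is_derive_Kint_t (x t : R) : x < 1 ->
  is_derive (Kint x) t (x * sin t * cos t * Kint x t ^ 3).
Proof.
  intros Hx. pose proof (sqrt_Kint_den_pos x t Hx). pose proof (Kint_den_pos x t Hx).
  unfold Kint. auto_derive; fold_Kint_den.
  - repeat split; lra.
  - field. lra.
Qed.

Lemma ex_derive_Kint_t (x t : R) : x < 1 -> ex_derive (Kint x) t.
Proof. intros Hx. eexists. now apply is_derive_Kint_t. Qed.

(* Continuity in [t] of all the integrands below: [auto_derive] reduces differentiability
   to that of [Kint x]. *)
Ltac continuous_in_t :=
  apply (@ex_derive_continuous R_AbsRing R_NormedModule);
  auto_derive; repeat split; auto; try (apply ex_derive_Kint_t; auto).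

Lemma continuous_Kint (x t : R) : x < 1 -> continuous (Kint x) t.
Proof. intros Hx. pose proof (ex_derive_Kint_t x t Hx). continuous_in_t. Qed.

Lemma continuous_dKint (x t : R) : x < 1 -> continuous (dKint x) t.
Proof. intros Hx. pose proof (ex_derive_Kint_t x t Hx). unfold dKint. continuous_in_t. Qed.

Lemma continuity_2d_pt_pow (f : R -> R -> R) (x y : R) (n : nat) :
  continuity_2d_pt f x y -> continuity_2d_pt (fun u v => f u v ^ n) x y.
Proof.
  intros Hf. induction n as [|n IH]; simpl.
  - apply continuity_2d_pt_const.
  - now apply continuity_2d_pt_mult.
Qed.

Lemma continuity_2d_pt_sin (x y : R) : continuity_2d_pt (fun _ v => sin v) x y.
Proof.
  apply continuity_1d_2d_pt_comp with (f := sin) (g := fun _ v => v).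
  - apply continuity_sin.
  - apply continuity_2d_pt_id2.
Qed.

Lemma continuity_2d_pt_sin_pow (x t : R) (n : nat) :
  continuity_2d_pt (fun _ v => sin v ^ n) x t.
Proof. apply continuity_2d_pt_pow, continuity_2d_pt_sin. Qed.

Lemma continuity_2d_pt_Kint (x t : R) : x < 1 -> continuity_2d_pt Kint x t.
Proof.
  intros Hx. unfold Kint. apply continuity_2d_pt_inv.
  2: { apply Rgt_not_eq, sqrt_Kint_den_pos, Hx. }
  apply continuity_1d_2d_pt_comp with (f := sqrt) (g := fun u v => 1 - u * sin v ^ 2).
  - apply continuity_pt_sqrt, Rlt_le, Kint_den_pos, Hx.
  - apply continuity_2d_pt_minus; [apply continuity_2d_pt_const |].
    apply continuity_2d_pt_mult; [apply continuity_2d_pt_id1 |].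
    apply continuity_2d_pt_sin_pow.
Qed.

Lemma continuity_2d_pt_dKint (x t : R) : x < 1 -> continuity_2d_pt dKint x t.
Proof.
  intros Hx. unfold dKint, Rdiv.
  apply continuity_2d_pt_mult; [apply continuity_2d_pt_mult |].
  - apply continuity_2d_pt_sin_pow.
  - apply continuity_2d_pt_pow, continuity_2d_pt_Kint, Hx.
  - apply continuity_2d_pt_const.
Qed.

Lemma continuity_2d_pt_d2Kint (x t : R) : x < 1 -> continuity_2d_pt d2Kint x t.
Proof.
  intros Hx. unfold d2Kint.
  apply continuity_2d_pt_mult; [apply continuity_2d_pt_mult |].
  - apply continuity_2d_pt_const.
  - apply continuity_2d_pt_sin_pow.
  - apply continuity_2d_pt_pow, continuity_2d_pt_Kint, Hx.
Qed.

Lemma is_derive_K (x : R) : x < 1 -> is_derive K x (dK x).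
Proof.
  intros Hx. apply is_derive_RInt_param_lt with (c := 1); auto.
  - intros. now apply is_derive_Kint.
  - intros. now apply continuity_2d_pt_dKint.
  - intros. now apply continuous_Kint.
Qed.

Lemma is_derive_dK (x : R) : x < 1 -> is_derive dK x (d2K x).
Proof.
  intros Hx. apply is_derive_RInt_param_lt with (c := 1); auto.
  - intros. now apply is_derive_dKint.
  - intros. now apply continuity_2d_pt_d2Kint.
  - intros. now apply continuous_dKint.
Qed.

Lemma Kx_eq_K (x : R) : 0 <= x -> Kx x = K x.
Proof.
  intros Hx. unfold Kx, ellipticK, K. apply RInt_ext. intros t _.
  unfold Kint. now rewrite pow2_sqrt.
Qed.

(** * The second derivative of [h p] *)

Definition hK (p x : R) : R := Rpower (1 - x) p * K x.
Definition dhK (p x : R) : R := - p * Rpower (1 - x) (p - 1) * K x + Rpower (1 - x) p * dK x.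
Definition d2hK (p x : R) : R :=
  p * (p - 1) * Rpower (1 - x) (p - 2) * K x - 2 * p * Rpower (1 - x) (p - 1) * dK x
  + Rpower (1 - x) p * d2K x.

Definition Mint (p x t : R) : R :=
  (p * p - p) * Kint x t - p * (1 - x) * sin t ^ 2 * Kint x t ^ 3
  + 3 / 4 * (1 - x) ^ 2 * sin t ^ 4 * Kint x t ^ 5.

Definition M (p x : R) : R := RInt (Mint p x) 0 (PI / 2).

Lemma Rpower_pred (a p : R) : 0 < a -> Rpower a p = Rpower a (p - 1) * a.
Proof.
  intros Ha. unfold Rpower.
  replace (p * ln a) with ((p - 1) * ln a + ln a) by ring.
  now rewrite exp_plus, exp_ln.
Qed.

Lemma Rpower_pos (a p : R) : 0 < Rpower a p.
Proof. apply exp_pos. Qed.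

Lemma is_derive_Rpower_1m (p x : R) : x < 1 ->
  is_derive (fun u => Rpower (1 - u) p) x (- p * Rpower (1 - x) (p - 1)).
Proof.
  intros Hx.
  replace (Rpower (1 - x) (p - 1)) with (Rpower (1 - x) p / (1 - x))
    by (rewrite (Rpower_pred (1 - x) p) by lra; field; lra).
  unfold Rpower. auto_derive.
  - lra.
  - replace (1 + - x) with (1 - x) by ring. field. lra.
Qed.

Lemma is_derive_Rpower_1m_mul (p x : R) (f : R -> R) (df : R) : x < 1 -> is_derive f x df ->
  is_derive (fun u => Rpower (1 - u) p * f u) x
    (- p * Rpower (1 - x) (p - 1) * f x + Rpower (1 - x) p * df).
Proof.
  intros Hx Hf.
  replace (- p * Rpower (1 - x) (p - 1) * f x + Rpower (1 - x) p * df)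
    with (plus (mult (- p * Rpower (1 - x) (p - 1)) (f x)) (mult (Rpower (1 - x) p) df))
    by (unfold plus, mult; simpl; ring).
  apply (@is_derive_mult R_AbsRing (fun u => Rpower (1 - u) p) f).
  - now apply is_derive_Rpower_1m.
  - exact Hf.
  - intros. apply Rmult_comm.
Qed.

Lemma is_derive_hK (p x : R) : x < 1 -> is_derive (hK p) x (dhK p x).
Proof. intros Hx. apply is_derive_Rpower_1m_mul; auto using is_derive_K. Qed.

Lemma is_derive_dhK (p x : R) : x < 1 -> is_derive (dhK p) x (d2hK p x).
Proof.
  intros Hx.
  assert (Hsum : is_derive (fun u => - p * (Rpower (1 - u) (p - 1) * K u)
                                  + Rpower (1 - u) p * dK u) x
     (- p * (- (p - 1) * Rpower (1 - x) (p - 1 - 1) * K x + Rpower (1 - x) (p - 1) * dK x)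
      + (- p * Rpower (1 - x) (p - 1) * dK x + Rpower (1 - x) p * d2K x))).
  { apply (@is_derive_plus R_AbsRing).
    - apply is_derive_scal, is_derive_Rpower_1m_mul; auto using is_derive_K.
    - apply is_derive_Rpower_1m_mul; auto using is_derive_dK. }
  replace (p - 1 - 1) with (p - 2) in Hsum by ring.
  replace (d2hK p x) with
    (- p * (- (p - 1) * Rpower (1 - x) (p - 2) * K x + Rpower (1 - x) (p - 1) * dK x)
     + (- p * Rpower (1 - x) (p - 1) * dK x + Rpower (1 - x) p * d2K x))
    by (unfold d2hK; ring).
  refine (is_derive_ext _ _ _ _ _ Hsum). intros u. unfold dhK. now rewrite Rmult_assoc.
Qed.

Lemma M_eq_K (p x : R) : x < 1 ->
  M p x = (p * p - p) * K x + (- 2 * p * (1 - x)) * dK x + (1 - x) ^ 2 * d2K x.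
Proof.
  intros Hx. unfold M, K, dK, d2K. rewrite <- RInt_lin3.
  - apply RInt_ext. intros t _. unfold Mint, dKint, d2Kint. simpl. field.
  - apply ex_RInt_of_continuous. intros. now apply continuous_Kint.
  - apply ex_RInt_of_continuous. intros. now apply continuous_dKint.
  - apply ex_RInt_of_continuous. intros t. pose proof (ex_derive_Kint_t x t Hx).
    unfold d2Kint. continuous_in_t.
Qed.

Lemma d2hK_eq (p x : R) : x < 1 -> d2hK p x = Rpower (1 - x) (p - 2) * M p x.
Proof.
  intros Hx. rewrite M_eq_K by exact Hx. unfold d2hK.
  rewrite (Rpower_pred (1 - x) p), (Rpower_pred (1 - x) (p - 1)) by lra.
  replace (p - 1 - 1) with (p - 2) by ring. ring.
Qed.

(** * A positive form of [M] *)

Definition Dpoly (p : R) : R := 2 * p * p - 3 * p + 9 / 16.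
Definition Epoly (p r : R) : R := (p * p - p) + (p * p - 2 * p + 3 / 8) * r + 3 / 16 * r ^ 2.
Definition bracket (p x r : R) : R := (1 - x) * Dpoly p + x * Epoly p r.

Definition ratio (x t : R) : R := (1 - x) * sin t ^ 2 * Kint x t ^ 2.
Definition Nint (p x t : R) : R := Kint x t * sin t ^ 2 * bracket p x (ratio x t).

(* [Nint - Mint] is an exact [t]-derivative, of a function vanishing at [0] and [PI/2]. *)
Definition Mprim (p x t : R) : R :=
  sin t * cos t * Kint x t * (- (p * p - p) + 3 / 16 * (1 - x) * sin t ^ 2 * Kint x t ^ 2).

Lemma Mprim_derive_identity (p x s c w : R) :
  0 < 1 - x * s ^ 2 -> c * c = 1 - s * s -> w * w = / (1 - x * s ^ 2) ->
  let q := - (p * p - p) + 3 / 16 * (1 - x) * (s * s) * (w * w) in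
  (c * c - s * s) * w * q + x * (s * s) * (c * c) * w * (w * w) * q
  + 3 / 8 * (1 - x) * (s * s) * (c * c) * w * (w * w) * (1 + x * (s * s) * (w * w))
  = w * s ^ 2 * bracket p x ((1 - x) * s ^ 2 * w ^ 2)
    - ((p * p - p) * w - p * (1 - x) * s ^ 2 * w ^ 3 + 3 / 4 * (1 - x) ^ 2 * s ^ 4 * w ^ 5).
Proof.
  intros Hd Hc Hw q. unfold q, bracket, Dpoly, Epoly.
  replace (w ^ 2) with (w * w) by ring.
  replace (w ^ 3) with (w * (w * w)) by ring.
  replace (w ^ 5) with (w * (w * w) * (w * w)) by ring.
  rewrite Hc, Hw. field. lra.
Qed.

Lemma is_derive_Mprim (p x t : R) : x < 1 ->
  is_derive (Mprim p x) t (Nint p x t - Mint p x t).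
Proof.
  intros Hx.
  assert (Hw : Kint x t * Kint x t = / (1 - x * sin t ^ 2)).
  { pose proof (Kint_sq x t Hx). pose proof (Kint_den_pos x t Hx).
    rewrite <- (Rmult_1_l (/ _)), <- H at 1. field. lra. }
  assert (Hc : cos t * cos t = 1 - sin t * sin t)
    by (pose proof (sin_cos_sq t); simpl in *; lra).
  unfold Nint, Mint, ratio.
  rewrite <- (Mprim_derive_identity p x (sin t) (cos t) (Kint x t))
    by auto using Kint_den_pos.
  unfold Mprim. auto_derive.
  - repeat split; apply ex_derive_Kint_t, Hx.
  - replace (Derive (fun u => Kint x u) t) with (x * sin t * cos t * Kint x t ^ 3)
      by (symmetry; apply is_derive_unique, is_derive_Kint_t, Hx).
    field.
Qed.

Lemma continuous_Mint (p x t : R) : x < 1 -> continuous (Mint p x) t.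
Proof. intros Hx. pose proof (ex_derive_Kint_t x t Hx). unfold Mint. continuous_in_t. Qed.

Lemma continuous_Nint (p x t : R) : x < 1 -> continuous (Nint p x) t.
Proof.
  intros Hx. pose proof (ex_derive_Kint_t x t Hx).
  unfold Nint, bracket, Epoly, ratio. continuous_in_t.
Qed.

Lemma M_eq_RInt_Nint (p x : R) : x < 1 -> M p x = RInt (Nint p x) 0 (PI / 2).
Proof.
  intros Hx.
  assert (HI : is_RInt (fun t => minus (Nint p x t) (Mint p x t)) 0 (PI / 2)
                 (minus (Mprim p x (PI / 2)) (Mprim p x 0))).
  { apply (@is_RInt_derive R_CompleteNormedModule); intros t _.
    - now apply is_derive_Mprim.
    - apply (@continuous_minus R_UniformSpace R_AbsRing R_NormedModule);
        auto using continuous_Nint, continuous_Mint. }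
  replace (minus (Mprim p x (PI / 2)) (Mprim p x 0)) with 0 in HI
    by (unfold Mprim; rewrite cos_PI2, sin_0; unfold minus, plus, opp; simpl; ring).
  apply (@is_RInt_unique R_CompleteNormedModule) in HI.
  rewrite (RInt_minus (V := R_CompleteNormedModule)) in HI.
  - unfold M. unfold minus, plus, opp in HI; simpl in HI. lra.
  - apply ex_RInt_of_continuous. intros. now apply continuous_Nint.
  - apply ex_RInt_of_continuous. intros. now apply continuous_Mint.
Qed.

Lemma ratio_bounds (x t : R) : x < 1 -> 0 < t < PI / 2 -> 0 <= ratio x t < 1.
Proof.
  intros Hx Ht. destruct (sin_cos_pos t Ht) as [[Hs0 Hs1] _].
  pose proof (Kint_sq x t Hx). pose proof (Kint_den_pos x t Hx).
  assert (0 < Kint x t ^ 2) by (pose proof (Kint_pos x t Hx); nra).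
  assert (0 < sin t ^ 2 < 1) by (split; nra).
  unfold ratio. split; nra.
Qed.

Lemma M_pos_of_bracket_pos (p x : R) : x < 1 ->
  (forall r, 0 <= r < 1 -> 0 < bracket p x r) -> 0 < M p x.
Proof.
  intros Hx Hb. rewrite M_eq_RInt_Nint by exact Hx.
  apply RInt_gt_0; [apply PI2_pos | | intros; now apply continuous_Nint].
  intros t Ht. destruct (sin_cos_pos t Ht) as [[Hs0 _] _].
  pose proof (Kint_pos x t Hx). pose proof (Hb _ (ratio_bounds x t Hx Ht)).
  unfold Nint. repeat apply Rmult_lt_0_compat; auto. nra.
Qed.

Lemma M_neg_of_bracket_neg (p x : R) : x < 1 ->
  (forall r, 0 <= r < 1 -> bracket p x r < 0) -> M p x < 0.
Proof.
  intros Hx Hb. rewrite M_eq_RInt_Nint by exact Hx.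
  apply RInt_lt_0; [apply PI2_pos | | intros; now apply continuous_Nint].
  intros t Ht. destruct (sin_cos_pos t Ht) as [[Hs0 _] _].
  pose proof (Kint_pos x t Hx). pose proof (Hb _ (ratio_bounds x t Hx Ht)).
  assert (0 < Kint x t * sin t ^ 2) by (apply Rmult_lt_0_compat; nra).
  unfold Nint. nra.
Qed.

Definition cplus : R := 3 * (2 + sqrt 2) / 8.
Definition cminus : R := 3 * (2 - sqrt 2) / 8.

Lemma Dpoly_factor (p : R) : Dpoly p = 2 * (p - cminus) * (p - cplus).
Proof.
  pose proof (sqrt_sqrt 2 ltac:(lra)). unfold Dpoly, cminus, cplus. nra.
Qed.

Lemma cplus_cminus_bounds : 127 / 100 < cplus < 129 / 100 /\ 21 / 100 < cminus < 23 / 100.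
Proof.
  pose proof (sqrt_sqrt 2 ltac:(lra)). pose proof (sqrt_pos 2).
  assert (141 / 100 < sqrt 2 < 142 / 100) by (split; nra).
  unfold cplus, cminus. lra.
Qed.

Lemma Epoly_alt (p r : R) :
  Epoly p r = (1 - r) * (p * p - p) + r * Dpoly p - 3 / 16 * r * (1 - r).
Proof. unfold Epoly, Dpoly. field. Qed.

Lemma bracket_pos (p x r : R) : p <= 0 \/ cplus <= p -> 0 < x < 1 -> 0 <= r < 1 ->
  0 < bracket p x r.
Proof.
  intros Hp Hx Hr. destruct cplus_cminus_bounds as [Hcp Hcm].
  unfold bracket. destruct Hp as [Hp | Hp].
  - assert (0 < Dpoly p) by (rewrite Dpoly_factor; nra).
    assert (0 <= Epoly p r) by (unfold Epoly; nra). nra.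
  - assert (0 <= Dpoly p) by (rewrite Dpoly_factor; nra).
    (* [p * p - p > 3 / 16] beats the last term of [Epoly_alt] *)
    assert (3 / 16 < p * p - p) by nra.
    assert (0 < Epoly p r) by (rewrite Epoly_alt; nra). nra.
Qed.

Lemma bracket_neg (p x r : R) : cminus <= p <= 1 -> 0 < x < 1 -> 0 <= r < 1 ->
  bracket p x r < 0.
Proof.
  intros Hp Hx Hr. destruct cplus_cminus_bounds as [Hcp Hcm].
  assert (HD : Dpoly p <= 0) by (rewrite Dpoly_factor; nra).
  assert (HP : p * p - p <= 0) by nra.
  assert (0 <= r * (1 - r)) by nra.
  assert (r * Dpoly p <= 0) by nra.
  assert ((1 - r) * (p * p - p) <= 0) by nra.
  assert (HE : Epoly p r <= 0) by (rewrite Epoly_alt; lra).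
  unfold bracket. destruct (Rlt_or_le p 1) as [Hp1 | Hp1].
  - assert ((1 - r) * (p * p - p) < 0) by (apply Rmult_pos_neg; nra).
    assert (Epoly p r < 0) by (rewrite Epoly_alt; lra). nra.
  - assert (Dpoly p < 0) by (rewrite Dpoly_factor; nra). nra.
Qed.

Lemma bracket_neg_near0 (p x r : R) : 1 <= p < cplus -> 0 < x ->
  x * ((p * p - p) - Dpoly p) < - Dpoly p -> 0 <= r < 1 -> bracket p x r < 0.
Proof.
  intros Hp Hx Hsmall Hr. destruct cplus_cminus_bounds as [Hcp Hcm].
  assert (HD : Dpoly p < 0) by (rewrite Dpoly_factor; nra).
  assert (0 <= r * (p * p - p)) by (apply Rmult_le_pos; nra).
  assert (r * Dpoly p <= 0) by nra.
  assert (0 <= r * (1 - r)) by nra.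
  assert (Epoly p r <= p * p - p) by (rewrite Epoly_alt; lra).
  unfold bracket. nra.
Qed.

Lemma bracket_pos_near0 (p x r : R) : 0 < p < cminus -> 0 < x ->
  x * (Dpoly p + (p - 2 * (p * p - p))) < Dpoly p -> 0 <= r < 1 -> 0 < bracket p x r.
Proof.
  intros Hp Hx Hsmall Hr. destruct cplus_cminus_bounds as [Hcp Hcm].
  assert (HD : 0 < Dpoly p) by (rewrite Dpoly_factor; nra).
  assert (2 * (p * p - p) - p <= Epoly p r) by (unfold Epoly; nra).
  unfold bracket. nra.
Qed.

Lemma small_enough (a b : R) : 0 < a -> 0 <= b ->
  exists x1, 0 < x1 <= 1 /\ forall x, 0 < x < x1 -> x * (a + b) < a.
Proof.
  intros Ha Hb. exists (a / (a + b)). split; [split |].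
  - apply Rdiv_lt_0_compat; lra.
  - apply Rmult_le_reg_r with (a + b); [lra |]. field_simplify; lra.
  - intros x [_ Hx]. apply Rmult_lt_compat_r with (r := a + b) in Hx; [| lra].
    replace (a / (a + b) * (a + b)) with a in Hx by (field; lra). lra.
Qed.

Lemma M_neg_near0 (p : R) : 1 <= p < cplus ->
  exists x1, 0 < x1 <= 1 /\ forall x, 0 < x < x1 -> M p x < 0.
Proof.
  intros Hp. destruct cplus_cminus_bounds as [Hcp Hcm].
  assert (HD : 0 < - Dpoly p) by (rewrite Dpoly_factor; nra).
  destruct (small_enough (- Dpoly p) (p * p - p)) as [x1 [Hx1 Hsmall]]; [lra | nra |].
  exists x1. split; [exact Hx1 |]. intros x Hx.
  apply M_neg_of_bracket_neg; [lra |]. intros r Hr.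
  apply bracket_neg_near0; auto; try lra.
  specialize (Hsmall x Hx). lra.
Qed.

Lemma M_pos_near0 (p : R) : 0 < p < cminus ->
  exists x1, 0 < x1 <= 1 /\ forall x, 0 < x < x1 -> 0 < M p x.
Proof.
  intros Hp. destruct cplus_cminus_bounds as [Hcp Hcm].
  assert (HD : 0 < Dpoly p) by (rewrite Dpoly_factor; nra).
  destruct (small_enough (Dpoly p) (p - 2 * (p * p - p))) as [x1 [Hx1 Hsmall]]; [lra | nra |].
  exists x1. split; [exact Hx1 |]. intros x Hx.
  apply M_pos_of_bracket_pos; [lra |]. intros r Hr.
  apply bracket_pos_near0; auto; lra.
Qed.

(** * Behaviour of [M] near [x = 1] *)

Definition Jint (x t : R) : R := (1 - x) * sin t ^ 2 * Kint x t ^ 3.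
Definition J (x : R) : R := RInt (Jint x) 0 (PI / 2).

Lemma continuous_Jint (x t : R) : x < 1 -> continuous (Jint x) t.
Proof. intros Hx. pose proof (ex_derive_Kint_t x t Hx). unfold Jint. continuous_in_t. Qed.

(* [- cos t * Kint x t] is a primitive of [(1 - x) * sin t * Kint x t ^ 3]. *)
Lemma is_RInt_sin_Kint3 (x : R) : x < 1 ->
  is_RInt (fun t => (1 - x) * sin t * Kint x t ^ 3) 0 (PI / 2) 1.
Proof.
  intros Hx.
  assert (HI : is_RInt (fun t => (1 - x) * sin t * Kint x t ^ 3) 0 (PI / 2)
                 (minus (- cos (PI / 2) * Kint x (PI / 2)) (- cos 0 * Kint x 0))).
  { apply (@is_RInt_derive R_CompleteNormedModule (fun t => - cos t * Kint x t));
      intros t _.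
    - pose proof (Kint_sq x t Hx) as Hsq. pose proof (sin_cos_sq t) as Hcs.
      auto_derive; [apply ex_derive_Kint_t, Hx |].
      replace (Derive (fun u => Kint x u) t) with (x * sin t * cos t * Kint x t ^ 3)
        by (symmetry; apply is_derive_unique, is_derive_Kint_t, Hx).
      replace (Kint x t) with (Kint x t ^ 3 * (1 - x * sin t ^ 2)) at 1
        by (transitivity (Kint x t * (Kint x t ^ 2 * (1 - x * sin t ^ 2)));
            [ring | rewrite Hsq; ring]).
      transitivity ((1 - x) * sin t * Kint x t ^ 3
                    + x * sin t * Kint x t ^ 3 * (1 - sin t ^ 2 - cos t ^ 2));
        [ring | rewrite Hcs; ring].
    - pose proof (ex_derive_Kint_t x t Hx). continuous_in_t. }
  replace (minus (- cos (PI / 2) * Kint x (PI / 2)) (- cos 0 * Kint x 0)) with 1 in HI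
    by (rewrite cos_PI2, cos_0, Kint_at_0; unfold minus, plus, opp; simpl; ring).
  exact HI.
Qed.

Lemma J_le_1 (x : R) : x < 1 -> J x <= 1.
Proof.
  intros Hx. pose proof (is_RInt_sin_Kint3 x Hx) as HI.
  unfold J. rewrite <- (is_RInt_unique _ _ _ _ HI).
  apply RInt_le; [left; apply PI2_pos | | now exists 1 |].
  - apply ex_RInt_of_continuous. intros. now apply continuous_Jint.
  - intros t Ht. destruct (sin_cos_pos t Ht) as [[Hs0 Hs1] _].
    assert (0 < Kint x t ^ 3) by (apply pow_lt, Kint_pos, Hx).
    unfold Jint. apply Rmult_le_compat_r; [lra |]. apply Rmult_le_compat_l; nra.
Qed.

Lemma is_RInt_sin_div_cos (d : R) : 0 < d ->
  is_RInt (fun t => sin t / (d + cos t)) 0 (PI / 2) (ln (d + 1) - ln d).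
Proof.
  intros Hd. pose proof PI_RGT_0.
  assert (Hc : forall t, Rmin 0 (PI / 2) <= t <= Rmax 0 (PI / 2) -> 0 < d + cos t).
  { intros t Ht. rewrite Rmin_left, Rmax_right in Ht by lra.
    assert (0 <= cos t) by (apply cos_ge_0; lra). lra. }
  replace (ln (d + 1) - ln d)
    with (minus (- ln (d + cos (PI / 2))) (- ln (d + cos 0)))
    by (rewrite cos_PI2, cos_0, Rplus_0_r; unfold minus, plus, opp; simpl; ring).
  apply (@is_RInt_derive R_CompleteNormedModule (fun t => - ln (d + cos t)));
    intros t Ht; specialize (Hc t Ht).
  - auto_derive; [lra | field; lra].
  - apply (@ex_derive_continuous R_AbsRing R_NormedModule). auto_derive. lra.
Qed.

(* [Kint x t >= sin t / (sqrt (1 - x) + cos t)], which has an explicit integral. *)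
Lemma K_ge_ln (x : R) : x < 1 -> - ln (sqrt (1 - x)) <= K x.
Proof.
  intros Hx. set (d := sqrt (1 - x)).
  assert (Hd : 0 < d) by (apply sqrt_lt_R0; lra).
  assert (Hd2 : d * d = 1 - x) by (apply sqrt_sqrt; lra).
  pose proof (is_RInt_sin_div_cos d Hd) as HI.
  assert (0 < ln (d + 1)) by (rewrite <- ln_1; apply ln_increasing; lra).
  apply Rle_trans with (ln (d + 1) - ln d); [lra |].
  unfold K. rewrite <- (is_RInt_unique _ _ _ _ HI).
  apply RInt_le; [left; apply PI2_pos | eexists; exact HI | |].
  - apply ex_RInt_of_continuous. intros. now apply continuous_Kint.
  - intros t Ht. destruct (sin_cos_pos t Ht) as [[Hs0 Hs1] Hc0].
    pose proof (sqrt_Kint_den_pos x t Hx).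
    assert (sqrt (1 - x * sin t ^ 2) <= d + cos t).
    { rewrite <- (sqrt_pow2 (d + cos t)) by lra. apply sqrt_le_1_alt.
      pose proof (sin_cos_sq t). nra. }
    unfold Kint. apply Rle_trans with (/ (d + cos t)).
    + unfold Rdiv. rewrite <- (Rmult_1_l (/ (d + cos t))) at 2.
      apply Rmult_le_compat_r; [left; apply Rinv_0_lt_compat |]; lra.
    + apply Rinv_le_contravar; lra.
Qed.

Lemma K_large_near1 (L : R) : 0 < L ->
  exists x1, 0 < x1 < 1 /\ forall x, x1 < x < 1 -> L < K x.
Proof.
  intros HL.
  exists (1 - exp (- 2 * L)).
  assert (exp (- 2 * L) < 1) by (rewrite <- exp_0; apply exp_increasing; lra).
  pose proof (exp_pos (- 2 * L)). split; [lra |].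
  intros x Hx. pose proof (K_ge_ln x (proj2 Hx)).
  assert (ln (sqrt (1 - x) * sqrt (1 - x)) = ln (sqrt (1 - x)) + ln (sqrt (1 - x)))
    by (apply ln_mult; apply sqrt_lt_R0; lra).
  rewrite sqrt_sqrt in H2 by lra.
  assert (ln (1 - x) < - 2 * L).
  { rewrite <- (ln_exp (- 2 * L)). apply ln_increasing; lra. }
  lra.
Qed.

Lemma Mint_decomp (p x t : R) :
  Mint p x t = (p * p - p) * Kint x t - p * Jint x t + 3 / 4 * ratio x t * Jint x t.
Proof. unfold Mint, Jint, ratio. ring. Qed.

Lemma M_bounds (p x : R) : 0 < p -> x < 1 ->
  (p * p - p) * K x - p * J x <= M p x <= (p * p - p) * K x + 3 / 4 * J x.
Proof.
  intros Hp Hx.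
  assert (HK : ex_RInt (Kint x) 0 (PI / 2))
    by (apply ex_RInt_of_continuous; intros; now apply continuous_Kint).
  assert (HJ : ex_RInt (Jint x) 0 (PI / 2))
    by (apply ex_RInt_of_continuous; intros; now apply continuous_Jint).
  assert (HM : ex_RInt (Mint p x) 0 (PI / 2))
    by (apply ex_RInt_of_continuous; intros; now apply continuous_Mint).
  assert (Hpt : forall t, 0 < t < PI / 2 ->
             (p * p - p) * Kint x t + (- p) * Jint x t <= Mint p x t
             <= (p * p - p) * Kint x t + 3 / 4 * Jint x t).
  { intros t Ht. pose proof (ratio_bounds x t Hx Ht). pose proof (Kint_pos x t Hx).
    assert (0 <= Jint x t).
    { unfold Jint. apply Rmult_le_pos; [apply Rmult_le_pos; [lra | apply pow2_ge_0] |].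
      apply pow_le; lra. }
    rewrite Mint_decomp. split; nra. }
  unfold K, J, M. split.
  - replace (_ - p * _) with ((p * p - p) * RInt (Kint x) 0 (PI / 2)
                              + (- p) * RInt (Jint x) 0 (PI / 2)) by ring.
    rewrite <- RInt_lin2 by auto.
    apply RInt_le; auto; [left; apply PI2_pos | | intros t Ht; apply Hpt, Ht].
    apply (@ex_RInt_plus R_NormedModule); now apply (@ex_RInt_scal R_NormedModule).
  - rewrite <- RInt_lin2 by auto.
    apply RInt_le; auto; [left; apply PI2_pos | | intros t Ht; apply Hpt, Ht].
    apply (@ex_RInt_plus R_NormedModule); now apply (@ex_RInt_scal R_NormedModule).
Qed.

Lemma M_neg_near1 (p : R) : 0 < p < 1 ->
  exists x1, 0 < x1 < 1 /\ forall x, x1 < x < 1 -> M p x < 0.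
Proof.
  intros Hp. assert (HP : 0 < p - p * p) by nra.
  destruct (K_large_near1 (3 / 4 / (p - p * p))) as [x1 [Hx1 Hlarge]];
    [apply Rdiv_lt_0_compat; lra |].
  exists x1. split; [exact Hx1 |]. intros x Hx. specialize (Hlarge x Hx).
  pose proof (M_bounds p x (proj1 Hp) (proj2 Hx)). pose proof (J_le_1 x (proj2 Hx)).
  apply Rmult_lt_compat_l with (r := p - p * p) in Hlarge; [| exact HP].
  replace ((p - p * p) * (3 / 4 / (p - p * p))) with (3 / 4) in Hlarge by (field; lra).
  lra.
Qed.

Lemma M_pos_near1 (p : R) : 1 < p ->
  exists x1, 0 < x1 < 1 /\ forall x, x1 < x < 1 -> 0 < M p x.
Proof.
  intros Hp. assert (HP : 0 < p * p - p) by nra.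
  destruct (K_large_near1 (p / (p * p - p))) as [x1 [Hx1 Hlarge]];
    [apply Rdiv_lt_0_compat; lra |].
  exists x1. split; [exact Hx1 |]. intros x Hx. specialize (Hlarge x Hx).
  pose proof (M_bounds p x ltac:(lra) (proj2 Hx)). pose proof (J_le_1 x (proj2 Hx)).
  apply Rmult_lt_compat_l with (r := p * p - p) in Hlarge; [| exact HP].
  replace ((p * p - p) * (p / (p * p - p))) with p in Hlarge by (field; lra).
  nra.
Qed.

Lemma h_eq_hK (p x : R) : 0 <= x -> h p x = hK p x.
Proof. intros Hx. unfold h, hK. now rewrite Kx_eq_K. Qed.

Lemma h_strictly_convex_of_M_pos (p a b : R) : 0 <= a -> b <= 1 ->
  (forall x, a < x < b -> 0 < M p x) -> strictly_convex_on (h p) a b.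
Proof.
  intros Ha Hb HM. apply strictly_convex_on_ext with (hK p).
  { intros x Hx. symmetry. apply h_eq_hK. lra. }
  apply strictly_convex_on_of_derive2_pos with (dhK p) (d2hK p); intros x Hx.
  - apply is_derive_hK. lra.
  - apply is_derive_dhK. lra.
  - rewrite d2hK_eq by lra. apply Rmult_lt_0_compat; auto using Rpower_pos.
Qed.

Lemma h_strictly_concave_of_M_neg (p a b : R) : 0 <= a -> b <= 1 ->
  (forall x, a < x < b -> M p x < 0) -> strictly_concave_on (h p) a b.
Proof.
  intros Ha Hb HM. apply strictly_concave_on_ext with (hK p).
  { intros x Hx. symmetry. apply h_eq_hK. lra. }
  apply strictly_concave_on_of_derive2_neg with (dhK p) (d2hK p); intros x Hx.
  - apply is_derive_hK. lra.
  - apply is_derive_dhK. lra.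
  - rewrite d2hK_eq by lra. pose proof (Rpower_pos (1 - x) (p - 2)).
    specialize (HM x Hx). nra.
Qed.

Lemma h_strictly_convex (p : R) : p <= 0 \/ cplus <= p -> strictly_convex_on (h p) 0 1.
Proof.
  intros Hp. apply h_strictly_convex_of_M_pos; try lra. intros x Hx.
  apply M_pos_of_bracket_pos; [lra |]. intros r Hr. now apply bracket_pos.
Qed.

Lemma h_strictly_concave (p : R) : cminus <= p <= 1 -> strictly_concave_on (h p) 0 1.
Proof.
  intros Hp. apply h_strictly_concave_of_M_neg; try lra. intros x Hx.
  apply M_neg_of_bracket_neg; [lra |]. intros r Hr. now apply bracket_neg.
Qed.

Lemma h_not_strictly_convex (p : R) : 0 < p < cplus -> ~ strictly_convex_on (h p) 0 1.
Proof.
  intros Hp Hconv. destruct (Rlt_or_le p 1) as [Hp1 | Hp1].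
  - destruct (M_neg_near1 p (conj (proj1 Hp) Hp1)) as [x1 [Hx1 Hneg]].
    apply (not_strictly_convex_concave (h p) x1 1); [lra | |].
    + apply strictly_convex_on_sub with 0 1; auto; lra.
    + apply h_strictly_concave_of_M_neg; auto; lra.
  - destruct (M_neg_near0 p (conj Hp1 (proj2 Hp))) as [x1 [Hx1 Hneg]].
    apply (not_strictly_convex_concave (h p) 0 x1); [lra | |].
    + apply strictly_convex_on_sub with 0 1; auto; lra.
    + apply h_strictly_concave_of_M_neg; auto; lra.
Qed.

Lemma h_not_strictly_concave (p : R) : p < cminus \/ 1 < p -> ~ strictly_concave_on (h p) 0 1.
Proof.
  intros Hp Hconc. destruct cplus_cminus_bounds as [_ Hcm].
  destruct (Rle_or_lt p 0) as [Hp0 | Hp0]; [| destruct Hp as [Hp | Hp]].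
  - apply (not_strictly_convex_concave (h p) 0 1); auto; try lra.
    apply h_strictly_convex. now left.
  - destruct (M_pos_near0 p (conj Hp0 Hp)) as [x1 [Hx1 Hpos]].
    apply (not_strictly_convex_concave (h p) 0 x1); [lra | |].
    + apply h_strictly_convex_of_M_pos; auto; lra.
    + apply strictly_concave_on_sub with 0 1; auto; lra.
  - destruct (M_pos_near1 p Hp) as [x1 [Hx1 Hpos]].
    apply (not_strictly_convex_concave (h p) x1 1); [lra | |].
    + apply h_strictly_convex_of_M_pos; auto; lra.
    + apply strictly_concave_on_sub with 0 1; auto; lra.
Qed.

Theorem corollary1 (p : R) :
  (strictly_convex_on (h p) 0 1 <->
     (p <= 0 \/ 3 * (2 + sqrt 2) / 8 <= p)) /\
  (strictly_concave_on (h p) 0 1 <->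
     (3 * (2 - sqrt 2) / 8 <= p /\ p <= 1)).
Proof.
  fold cplus cminus. split; split.
  - intros Hconv. destruct (Rle_or_lt p 0) as [Hp0 | Hp0]; [now left |].
    destruct (Rle_or_lt cplus p) as [Hp | Hp]; [now right |].
    exfalso. now apply (h_not_strictly_convex p).
  - apply h_strictly_convex.
  - intros Hconc.
    destruct (Rlt_or_le p cminus) as [Hp | Hp];
      [exfalso; apply (h_not_strictly_concave p); auto |].
    destruct (Rle_or_lt p 1) as [Hp1 | Hp1]; [now split |].
    exfalso. apply (h_not_strictly_concave p); auto.
  - apply h_strictly_concave.
Qed.
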